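(* Assume $\mathrm{recc}(C)\subseteq\mathrm{recc}(P^B)$ and fix $k\in N_2$. For $j\in N$ let $\beta^*_j=\sup\{\lambda\ge0:\bar x+\lambda\bar r^j\in S_k^C\}$. Then $$\beta^*_j=\begin{cases}0&\text{if } j\in N_0\setminus J,\\ \beta_j&\text{if } j\in N_2\setminus J,\\ +\infty&\text{if } j\in J.\end{cases}$$
   Context: Let $A\in\mathbb{R}^{m\times n}$ have full row rank, $b\in\mathbb{R}^m$, and $P=\{x\in\mathbb{R}^n_+:Ax=b\}$. Let $C\subseteq\mathbb{R}^n$ be an open convex set. Fix a basis $B$ of $P$ with nonbasic set $N=\{1,\dots,n\}\setminus B$. Write $P=\{x:x_i=\bar b_i-\sum_{j\in N}\bar a_{ij}x_j\ (i\in B),\ x\ge0\}$ with $\bar b\ge0$. The basic solution $\bar x$ has $\bar x_i=\bar b_i$ ($i\in B$) and $0$ ($i\in N$). $P^B$ is obtained by dropping $x_i\ge0$ for $i\in B$. For $j\in N$, $\bar r^j$ has $\bar r^j_k=-\bar a_{kj}$ ($k\in B$), $\bar r^j_j=1$, and $0$ otherwise. Thus $P^B=\{\bar x+\sum_{j\in N}x_j\bar r^j:x_j\ge0\}$. It is assumed that $\bar x\notin\mathrm{cl}(C)$. For $j\in N$, $\alpha_j=\inf\{\lambda\ge0:\bar x+\lambda\bar r^j\in C\}$ and $\beta_j=\sup\{\lambda\ge0:\bar x+\lambda\bar r^j\in C\}$, with $\alpha_j=+\infty$, $\beta_j=-\infty$ if the halfline misses $C$. The set $N$ is partitioned into - $N_0=\{j:\alpha_j=+\infty,\beta_j=-\infty\}$,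 - $N_1=\{j:\alpha_j\in(0,\infty),\beta_j=+\infty\}$, - $N_2=\{j:\alpha_j\in(0,\infty),\beta_j\in(\alpha_j,\infty)\}$. For a set $K$, $\mathrm{recc}(K)=\{d:x+\lambda d\in K\ \forall x\in K,\lambda\ge0\}$. For $k\in N_2$, $S_k^C=\{\bar x\}+\mathrm{conv}\big(\bigcup_{j\in N_2}\{\lambda\bar r^j:0\le\lambda<\beta_j\}\big)+\{\lambda\bar r^k:\lambda\le0\}+\mathrm{recc}(C)$, and $J=\{i\in N:\bar r^i\in\mathrm{recc}(S_k^C)\}$. *)

(* Vectors of R^n are row vectors 'rV[R]_n
   (with the canonical normed-space topology from matrix_normedtype). *)
From HB Require Import structures.
From mathcomp Require Import all_boot all_order all_algebra.
From mathcomp Require Import all_classical all_reals all_analysis.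
Set Implicit Arguments. Unset Strict Implicit. Unset Printing Implicit Defensive.
Import Order.TTheory GRing.Theory Num.Theory.
Import numFieldTopology.Exports numFieldNormedType.Exports.
Local Open Scope classical_set_scope.
Local Open Scope ring_scope.

Section Defs.
Variables (R : realType) (m n : nat).
Implicit Types (A : 'M[R]_(m, n)) (b : 'cV[R]_m) (f : 'I_m -> 'I_n).

Definition polyP A b : set 'rV[R]_n :=
  [set x : 'rV[R]_n | (forall i, 0 <= x 0 i) /\ A *m x^T = b].

(* A basis is given as an injective enumeration f : 'I_m -> 'I_n of the basic
   columns such that the basic submatrix A_B is invertible. *)
Definition is_basis A f := injective f /\ colsub f A \in unitmx.

Definition basic_set f : {set 'I_n} := [set i | [exists p, f p == i]].
Definition nonbasic f (j : 'I_n) : bool := j \notin basic_set f.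

Definition Abar A f : 'M[R]_(m, n) := invmx (colsub f A) *m A.
Definition bbar A b f : 'cV[R]_m := invmx (colsub f A) *m b.

Definition feasible_basis A b f := forall p, 0 <= bbar A b f p 0.

Definition xbar A b f : 'rV[R]_n :=
  \row_i (if [pick p | f p == i] is Some p then bbar A b f p 0 else 0).

Definition rbar A f (j : 'I_n) : 'rV[R]_n :=
  \row_k (if k == j then 1
          else if [pick p | f p == k] is Some p then - Abar A f p j else 0).

Definition PB A b f : set 'rV[R]_n :=
  [set y : 'rV[R]_n | exists x : 'I_n -> R, (forall j, nonbasic f j -> 0 <= x j) /\
     y = xbar A b f + \sum_(j | nonbasic f j) x j *: rbar A f j].

Definition recc (K : set 'rV[R]_n) : set 'rV[R]_n :=
  [set d : 'rV[R]_n | forall x, K x -> forall l : R, 0 <= l -> K (x + l *: d)].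

Definition convex_set_rv (K : set 'rV[R]_n) :=
  forall x y (t : R), K x -> K y -> 0 <= t <= 1 -> K (t *: x + (1 - t) *: y).

Definition conv (S : set 'rV[R]_n) : set 'rV[R]_n :=
  [set y : 'rV[R]_n | exists (q : nat) (v : 'I_q -> 'rV[R]_n) (w : 'I_q -> R),
     (forall i, S (v i)) /\ (forall i, 0 <= w i) /\ \sum_i w i = 1 /\
     y = \sum_i w i *: v i].

Definition minkowski (S T : set 'rV[R]_n) : set 'rV[R]_n :=
  [set z : 'rV[R]_n | exists x y, S x /\ T y /\ z = x + y].

Definition ray_hits (x d : 'rV[R]_n) (K : set 'rV[R]_n) : set (\bar R) :=
  [set l%:E | l in [set l : R | 0 <= l /\ K (x + l *: d)]].

(* alpha_j = inf, beta_j = sup; empty set gives +oo / -oo respectively *)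
Definition alpha A b f (C : set 'rV[R]_n) j : \bar R :=
  ereal_inf (ray_hits (xbar A b f) (rbar A f j) C).
Definition beta A b f (C : set 'rV[R]_n) j : \bar R :=
  ereal_sup (ray_hits (xbar A b f) (rbar A f j) C).

Definition inN0 A b f C j := nonbasic f j /\
  alpha A b f C j = +oo%E /\ beta A b f C j = -oo%E.
Definition inN1 A b f C j := nonbasic f j /\
  (0 < alpha A b f C j < +oo)%E /\ beta A b f C j = +oo%E.
Definition inN2 A b f C j := nonbasic f j /\
  (0 < alpha A b f C j < +oo)%E /\
  (alpha A b f C j < beta A b f C j < +oo)%E.

Definition SkC A b f C (k : 'I_n) : set 'rV[R]_n :=
  minkowski
    (minkowski
      (minkowski [set xbar A b f]
         (conv [set v | exists j l, inN2 A b f C j /\ 0 <= l /\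
                         (l%:E < beta A b f C j)%E /\ v = l *: rbar A f j]))
      [set v | exists l : R, l <= 0 /\ v = l *: rbar A f k])
    (recc C).

Definition Jset A b f C k (i : 'I_n) :=
  nonbasic f i /\ recc (SkC A b f C k) (rbar A f i).

Definition beta_star A b f C k j : \bar R :=
  ereal_sup (ray_hits (xbar A b f) (rbar A f j) (SkC A b f C k)).

End Defs.

From Pilot Require Import Defs.
From HB Require Import structures.
From mathcomp Require Import all_boot all_order all_algebra.
From mathcomp Require Import all_classical all_reals all_analysis.
From mathcomp Require Import lra ring.
Set Implicit Arguments. Unset Strict Implicit. Unset Printing Implicit Defensive.
Import Order.TTheory GRing.Theory Num.Theory.
Import numFieldTopology.Exports numFieldNormedType.Exports.
Local Open Scope classical_set_scope.
Local Open Scope ring_scope.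

(** Write a point of S_k^C as xbar + c + mu rbar^k + e with c in the convex
   hull of the segments [0, beta_i) rbar^i (i in N_2), mu <= 0 and e in
   recc(C).  Since recc(C) is contained in recc(P^B), e is a nonnegative
   combination of the rays, and reading off the nonbasic coordinates of
   xbar + lambda rbar^j = xbar + c + mu rbar^k + e shows that e only uses
   rbar^j and rbar^k.  If the coefficient of rbar^j were positive, rbar^j
   would be a recession direction of S_k^C (the rbar^k part is absorbed by
   mu), i.e. j would be in J.  Otherwise lambda <= c_j, and c_j is 0 for
   j in N_0 and below beta_j for j in N_2; conversely the segment
   [0, beta_j) rbar^j lies in S_k^C.  Only recc(C) <= recc(P^B) and
   k in N_2 are used. *)

Section ExtendedSup.
Variable R : realType.
Implicit Types (S : set R) (r : R).

Lemma ereal_sup_EFin_max S r :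
  S r -> (forall l, S l -> l <= r) -> ereal_sup (EFin @` S) = r%:E.
Proof.
move=> Sr ubr; apply/le_anti/andP; split.
  by apply: ge_ereal_sup => _ [l Sl <-]; rewrite lee_fin ubr.
by apply: ereal_sup_ubound; exists r.
Qed.

Lemma ereal_sup_EFin_itvco S r : 0 < r -> `[0, r[%classic `<=` S ->
  (forall l, S l -> l <= r) -> ereal_sup (EFin @` S) = r%:E.
Proof.
move=> r_gt0 sub ubr; apply/le_anti/andP; split.
  by apply: ge_ereal_sup => _ [l Sl <-]; rewrite lee_fin ubr.
rewrite -[X in (X%:E <= _)%E](@sup_itv _ (BLeft 0) true r) ?bnd_simp //.
rewrite -ereal_sup_EFin; first exact/ereal_sup_le/image_subset.
  by exists r => l /=; rewrite in_itv /= => /andP[_ /ltW].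
by exists 0; rewrite /= in_itv /= lexx r_gt0.
Qed.

Lemma ereal_sup_EFin_itvcy S :
  `[0, +oo[%classic `<=` S -> ereal_sup (EFin @` S) = +oo%E.
Proof.
have ge0 l : 0 <= l -> `[0, +oo[%classic l by rewrite /= in_itv /= andbT.
move=> sub; apply: hasNub_ereal_sup; last by exists 0; apply/sub/ge0.
apply/has_ubPn => r; exists (`|r| + 1); last by have := ler_norm r; lra.
by apply/sub/ge0; rewrite addr_ge0.
Qed.

End ExtendedSup.

Section ConvexHullCoordinates.
Variables (R : realType) (n : nat).
Implicit Types (S : set 'rV[R]_n) (i : 'I_n) (r : R).

Lemma sub_conv S : S `<=` Defs.conv S.
Proof.
move=> v Sv; exists 1%N, (fun=> v), (fun=> 1); do !split => //.
- by rewrite big_ord1.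
- by rewrite big_ord1 scale1r.
Qed.

Lemma conv_coord_ge0 S i :
  (forall v, S v -> 0 <= v 0 i) -> Defs.conv S `<=` [set c | 0 <= c 0 i].
Proof.
move=> S_ge0 _ [q [v [w [Sv [w_ge0 [_ ->]]]]]]; rewrite /= summxE.
by apply: sumr_ge0 => t _; rewrite mxE mulr_ge0 ?S_ge0.
Qed.

Lemma conv_coord_le S i r :
  (forall v, S v -> v 0 i <= r) -> Defs.conv S `<=` [set c | c 0 i <= r].
Proof.
move=> S_le _ [q [v [w [Sv [w_ge0 [w1 ->]]]]]]; rewrite /= summxE.
rewrite -[r]mul1r -w1 mulr_suml; apply: ler_sum => t _.
by rewrite mxE ler_wpM2l ?S_le.
Qed.

Lemma conv_coord_lt S i r :
  (forall v, S v -> v 0 i < r) -> Defs.conv S `<=` [set c | c 0 i < r].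
Proof.
move=> S_lt _ [q [v [w [Sv [w_ge0 [w1 ->]]]]]]; rewrite /= summxE.
have [t0 w_t0] : exists t0, 0 < w t0.
  apply: contrapT => /forallNP w_le0; move/eqP: w1; apply/negP.
  rewrite big1 1?eq_sym ?oner_eq0 // => t _.
  by apply/eqP; rewrite eq_le w_ge0 andbT leNgt; apply/negP/w_le0.
rewrite -subr_gt0 -[r]mul1r -w1 mulr_suml -sumrB (bigD1 t0) //=.
apply: ltr_pwDl; first by rewrite mxE -mulrBr mulr_gt0 // subr_gt0 S_lt.
apply: sumr_ge0 => t _.
by rewrite mxE -mulrBr mulr_ge0 // subr_ge0 ltW ?S_lt.
Qed.

End ConvexHullCoordinates.

Lemma sumr_supp2 (V : nmodType) (I : finType) (P : pred I) (F : I -> V) j k :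
  P j -> P k -> (forall p, P p -> p != j -> p != k -> F p = 0) ->
  \sum_(p | P p) F p = F j + (if j == k then 0 else F k).
Proof.
move=> Pj Pk F0; rewrite (bigD1 j) //=; congr (_ + _).
case: (eqVneq j k) F0 => [<- | kj] F0.
  by apply: big1 => p /andP[Pp pj]; rewrite F0.
rewrite (bigD1 k) /=; last by rewrite Pk eq_sym kj.
by rewrite big1 ?addr0 // => p /andP[/andP[Pp pj] pk]; rewrite F0.
Qed.

Section RecessionCone.
Variables (R : realType) (n : nat) (K : set 'rV[R]_n).

Lemma recc0 : recc K 0.
Proof. by move=> x Kx l _; rewrite scaler0 addr0. Qed.

Lemma reccDZ e d s : recc K e -> recc K d -> 0 <= s -> recc K (e + s *: d).
Proof.
move=> Ke Kd s_ge0 x Kx l l_ge0; rewrite scalerDr addrA scalerA.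
by apply: Kd; [exact: Ke | exact: mulr_ge0].
Qed.

End RecessionCone.

Section Tableau.
Variables (R : realType) (m n : nat) (A : 'M[R]_(m, n)) (b : 'cV[R]_m)
  (f : 'I_m -> 'I_n).
Local Notation rb := (rbar A f).
Local Notation xb := (xbar A b f).
Local Notation nb := (nonbasic f).

Lemma pick_nonbasic i : nb i -> [pick p | f p == i] = None.
Proof.
move=> i_nb; case: pickP => // p /eqP fp; move: i_nb.
by rewrite /nonbasic /basic_set inE negb_exists => /forallP/(_ p); rewrite fp eqxx.
Qed.

Lemma rbar_nonbasic p i : nb i -> rb p 0 i = (i == p)%:R.
Proof. by move=> i_nb; rewrite mxE; case: (i == p); rewrite ?pick_nonbasic. Qed.

Lemma xbar_nonbasic i : nb i -> xb 0 i = 0.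
Proof. by move=> i_nb; rewrite mxE pick_nonbasic. Qed.

Lemma cone_rbar_nonbasic (x : 'I_n -> R) i :
  nb i -> (\sum_(p | nb p) x p *: rb p) 0 i = x i.
Proof.
move=> i_nb; rewrite summxE (bigD1 i) //= big1 => [|p /andP[_ pi]].
  by rewrite mxE rbar_nonbasic // eqxx mulr1 addr0.
by rewrite mxE rbar_nonbasic // eq_sym (negbTE pi) mulr0.
Qed.

Lemma recc_PB_cone e : recc (PB A b f) e ->
  exists2 x : 'I_n -> R, (forall p, nb p -> 0 <= x p) &
    e = \sum_(p | nb p) x p *: rb p.
Proof.
have PB_xbar : PB A b f xb.
  by exists (fun=> 0); split=> //; rewrite big1 ?addr0 // => p _; rewrite scale0r.
case/(_ _ PB_xbar 1 ler01) => x [x_ge0]; rewrite scale1r => /addrI ->.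
by exists x.
Qed.

End Tableau.

Section Segments.
Variables (R : realType) (m n : nat) (A : 'M[R]_(m, n)) (b : 'cV[R]_m)
  (f : 'I_m -> 'I_n) (C : set 'rV[R]_n).
Local Notation rb := (rbar A f).
Local Notation nb := (nonbasic f).
Local Notation beta := (beta A b f C).

Lemma inN2_beta_fin j : inN2 A b f C j -> exists2 r, 0 < r & beta j = r%:E.
Proof.
case=> _ [/andP[alpha_gt0 _] /andP[]].
by move: (alpha_gt0) => /lt_trans/[apply]; case: (beta j) => // r; exists r.
Qed.

Definition N2_segments : set 'rV[R]_n :=
  [set v | exists j l, inN2 A b f C j /\ 0 <= l /\ (l%:E < beta j)%E /\
                       v = l *: rb j].

Lemma N2_segments_coord v i : nb i -> N2_segments v ->
  v 0 i = 0 \/ [/\ inN2 A b f C i, 0 <= v 0 i & ((v 0 i)%:E < beta i)%E].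
Proof.
move=> i_nb [j [l [j2 [l_ge0 [l_lt ->]]]]].
rewrite mxE rbar_nonbasic //; have [-> | _] := eqVneq i j; last by rewrite mulr0; left.
by rewrite mulr1; right.
Qed.

Lemma conv_N2_segments_ge0 i : nb i ->
  Defs.conv N2_segments `<=` [set c | 0 <= c 0 i].
Proof.
by move=> i_nb; apply: conv_coord_ge0 => v /(N2_segments_coord i_nb)[->|[]].
Qed.

Lemma conv_N2_segments_N0 i : nb i -> inN0 A b f C i ->
  Defs.conv N2_segments `<=` [set c | c 0 i <= 0].
Proof.
move=> i_nb [_ [alphaE _]]; apply: conv_coord_le => v.
case/(N2_segments_coord i_nb) => [-> // | [[_ [/andP[_]]]]].
by rewrite alphaE.
Qed.

Lemma conv_N2_segments_lt i r : nb i -> 0 < r -> beta i = r%:E ->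
  Defs.conv N2_segments `<=` [set c | c 0 i < r].
Proof.
move=> i_nb r_gt0 betaE; apply: conv_coord_lt => v.
by case/(N2_segments_coord i_nb) => [-> // | [_ _]]; rewrite betaE lte_fin.
Qed.

End Segments.

Section SkC.
Variables (R : realType) (m n : nat) (A : 'M[R]_(m, n)) (b : 'cV[R]_m)
  (f : 'I_m -> 'I_n) (C : set 'rV[R]_n) (k : 'I_n).
Local Notation rb := (rbar A f).
Local Notation xb := (xbar A b f).
Local Notation nb := (nonbasic f).
Local Notation X := (N2_segments A b f C).
Local Notation S := (SkC A b f C k).

Lemma SkCE z : S z <-> exists c mu e, [/\ Defs.conv X c, mu <= 0, recc C e &
  z = xb + c + mu *: rb k + e].
Proof.
split.
  case=> _ [e [[_ [_ [[_ [c [-> [Xc ->]]]] [[mu [mu_le0 ->]] ->]]]] [Ce ->]]].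
  by exists c, mu, e.
case=> c [mu [e [Xc mu_le0 Ce ->]]]; exists (xb + c + mu *: rb k), e.
split=> //; exists (xb + c), (mu *: rb k); split; last by split=> //; exists mu.
by exists xb, c.
Qed.

Lemma SkC_xbarD c : Defs.conv X c -> S (xb + c).
Proof.
move=> Xc; apply/SkCE; exists c, 0, 0; split=> //; first exact: recc0.
by rewrite scale0r !addr0.
Qed.

Lemma SkC_xbar : inN2 A b f C k -> S xb.
Proof.
move=> k2; have [r r_gt0 betaE] := inN2_beta_fin k2.
rewrite -[xb]addr0; apply/SkC_xbarD/sub_conv; exists k, 0.
by rewrite scale0r betaE lte_fin.
Qed.

(* The rbar^k component of a recession direction of C is absorbed by the
   halfline {mu rbar^k : mu <= 0}. *)
Lemma recc_SkC d a s :
  recc C (a *: d + s *: rb k) -> 0 < a -> 0 <= s -> recc S d.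
Proof.
move=> Ce a_gt0 s_ge0 _ /SkCE[c [mu [e' [Xc mu_le0 Ce' ->]]]] t t_ge0.
have ta_ge0 : 0 <= t / a by rewrite divr_ge0 // ltW.
apply/SkCE; exists c, (mu - t / a * s), (e' + (t / a) *: (a *: d + s *: rb k)).
split=> //; first by have := mulr_ge0 ta_ge0 s_ge0; lra.
  exact: reccDZ.
by apply/rowP => i; rewrite !mxE; field; rewrite gt_eqF.
Qed.

Hypotheses (k_nb : nb k) (reccC : recc C `<=` recc (PB A b f)).

Lemma SkC_ray_le_conv j l : nb j -> ~ recc S (rb j) ->
  S (xb + l *: rb j) -> exists2 c, Defs.conv X c & l <= c 0 j.
Proof.
move=> j_nb notJ /SkCE[c [mu [e [Xc mu_le0 Ce decomp]]]].
have [x x_ge0 eE] := recc_PB_cone (reccC Ce).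
have coord i : nb i -> l * (i == j)%:R = c 0 i + mu * (i == k)%:R + x i.
  move=> i_nb; have := congr1 (fun z : 'rV[R]_n => z 0 i) decomp.
  rewrite /= eE ![(_ + _ : 'rV_n) 0 i]mxE ![(_ *: _ : 'rV_n) 0 i]mxE.
  by rewrite cone_rbar_nonbasic // !rbar_nonbasic // xbar_nonbasic // !add0r.
have x_out p : nb p -> p != j -> p != k -> x p = 0.
  move=> p_nb pj pk; have := coord p p_nb.
  rewrite (negbTE pj) (negbTE pk) !mulr0 addr0.
  have := conv_N2_segments_ge0 p_nb Xc; have := x_ge0 p p_nb; rewrite /=; lra.
have e_supp : e = x j *: rb j + (if j == k then 0 else x k) *: rb k.
  rewrite eE (sumr_supp2 j_nb k_nb) => [|p *]; last by rewrite x_out ?scale0r.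
  by case: (j == k); rewrite ?scale0r.
have xj0 : x j = 0.
  apply/eqP; rewrite eq_le x_ge0 // andbT leNgt; apply/negP => xj_gt0.
  apply/notJ/(recc_SkC (a := x j) (s := if j == k then 0 else x k)) => //.
    by rewrite -e_supp.
  by case: (j == k); rewrite ?x_ge0.
exists c => //; have := coord j j_nb; rewrite eqxx xj0 mulr1 addr0 => ->.
by case: (j == k); rewrite ?(mulr1, mulr0); lra.
Qed.

End SkC.

Theorem proposition7 (R : realType) (m n : nat)
  (A : 'M[R]_(m, n)) (b : 'cV[R]_m) (C : set 'rV[R]_n) (f : 'I_m -> 'I_n)
  (k : 'I_n) :
  \rank A = m ->
  is_basis A f ->
  feasible_basis A b f ->
  open C -> convex_set_rv C ->
  ~ closure C (xbar A b f) ->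
  (forall j, nonbasic f j ->
     inN0 A b f C j \/ inN1 A b f C j \/ inN2 A b f C j) ->
  recc C `<=` recc (PB A b f) ->
  inN2 A b f C k ->
  forall j, nonbasic f j ->
    (inN0 A b f C j -> ~ Jset A b f C k j -> beta_star A b f C k j = 0%E) /\
    (inN2 A b f C j -> ~ Jset A b f C k j ->
       beta_star A b f C k j = beta A b f C j) /\
    (Jset A b f C k j -> beta_star A b f C k j = +oo%E).
Proof.
move=> _ _ _ _ _ _ _ reccC k2 j j_nb; rewrite /beta_star /ray_hits.
have bound l : ~ Jset A b f C k j ->
    0 <= l /\ SkC A b f C k (xbar A b f + l *: rbar A f j) ->
    exists2 c, Defs.conv (N2_segments A b f C) c & l <= c 0 j.
  move=> notJ [_]; apply: (SkC_ray_le_conv k2.1 reccC j_nb) => J.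
  exact: notJ.
split; [move=> j0 notJ | split; [move=> j2 notJ | case=> _ jJ]].
- apply: ereal_sup_EFin_max => [|l /(bound l notJ)[c Xc /le_trans]].
    by split; rewrite // scale0r addr0; exact: SkC_xbar.
  by apply; exact: conv_N2_segments_N0 Xc.
- have [r r_gt0 betaE] := inN2_beta_fin j2; rewrite betaE.
  apply: ereal_sup_EFin_itvco => // [l|l /(bound l notJ)[c Xc /le_trans]].
    rewrite /= in_itv /= => /andP[l_ge0 l_lt_r]; split=> //.
    by apply/SkC_xbarD/sub_conv; exists j, l; rewrite betaE lte_fin.
  by apply; apply/ltW; exact: conv_N2_segments_lt Xc.
- apply: ereal_sup_EFin_itvcy => l; rewrite /= in_itv /= andbT => l_ge0.
  by split=> //; apply: jJ l_ge0; exact: SkC_xbar.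
Qed.
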